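(* Let $(M,g)$ be a complete Riemannian manifold and let $V\in L^\infty_{\rm loc}(M)$ with $V\ge1$ a.e., $\operatorname{ess\,lim}_{d(p,p_0)\to\infty}V(p)=\infty$, satisfying the doubling condition. Then $$\lim_{\delta\to0}\frac{\int_M e^{-tV(x)}\,dx}{\int_M e^{-t(1-\delta)V(x)}\,dx}=1$$ uniformly in $t\in(0,1]$.
   Context: $d$ is the Riemannian distance, $p_0\in M$ fixed, $dx$ and $|\cdot|$ the Riemannian measure. $\operatorname{ess\,lim}V=\infty$ means: for every $L>0$ there is $R>0$ with $V(p)\ge L$ for a.e. $p$ with $d(p,p_0)\ge R$. Doubling condition: with $\sigma(\lambda)=|\{x:V(x)\le\lambda\}|$, there are $C_V,\lambda_0>0$ with $\sigma(2\lambda)\le C_V\sigma(\lambda)$ for all $\lambda\ge\lambda_0$. *)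

From HB Require Import structures.
From mathcomp Require Import all_boot all_order all_algebra.
From mathcomp Require Import all_classical all_reals all_analysis.
Set Implicit Arguments. Unset Strict Implicit. Unset Printing Implicit Defensive.
Import Order.TTheory GRing.Theory Num.Theory.
Local Open Scope classical_set_scope.
Local Open Scope ring_scope.

Definition sublevel_measure d (T : measurableType d) (R : realType)
  (mu : {measure set T -> \bar R}) (V : T -> R) (lam : R) : \bar R :=
  mu [set x | V x <= lam].

Definition partition_fn d (T : measurableType d) (R : realType)
  (mu : {measure set T -> \bar R}) (V : T -> R) (s : R) : \bar R :=
  (\int[mu]_x (expR (- (s * V x)))%:E)%E.

Definition doubling d (T : measurableType d) (R : realType)
  (mu : {measure set T -> \bar R}) (V : T -> R) : Prop :=
  exists CV lam0 : R, 0 < CV /\ 0 < lam0 /\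
    forall lam, lam0 <= lam ->
      (sublevel_measure mu V (2 * lam) <= CV%:E * sublevel_measure mu V lam)%E.

From HB Require Import structures.
From mathcomp Require Import all_boot all_order all_algebra.
From mathcomp Require Import all_classical all_reals all_analysis.
From mathcomp Require Import ring lra zify measurable_realfun.

(* As V >= 0,
   Z(t) <= Z(t(1-delta)).  Conversely, fix Lam >= max(lam0, 1) and
   A = 2^(m+1) Lam.  Where tV <= A, e^{-t(1-delta)V} <= e^{delta A} e^{-tV};
   where 2^n A < tV <= 2^(n+1) A, and delta <= 1/2, e^{-t(1-delta)V} is at
   most e^{-2^(n-1) A} (the dyadic tail).  Iterating the doubling condition
   from Lam/t >= lam0 bounds the integrated tail by
     sum_n e^{-2^(n+m) Lam} C^(n+m+2) sigma(Lam/t),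
   which, because e^{-2^N} beats C^N, is at most eta sigma(Lam/t) <= eta e^Lam Z(t)
   for any eta > 0 once m is large, uniformly in t in (0,1].  Hence
   Z(t) <= Z(t(1-delta)) <= (e^{delta A} + eta e^Lam) Z(t). *)

Set Implicit Arguments. Unset Strict Implicit. Unset Printing Implicit Defensive.
Import Order.TTheory GRing.Theory Num.Theory.
Local Open Scope classical_set_scope.
Local Open Scope ring_scope.

Section DyadicEstimates.
Variable R : realType.

Lemma exists_pow2_ge (x : R) : exists k : nat, x <= 2 ^+ k.
Proof.
exists (Num.truncn x).+1; apply: (le_trans (ltW (truncnS_gt x))).
by rewrite -natrX ler_nat ltnW // ltn_expl.
Qed.

Lemma exists_dyadic_bracket (z : R) : 1 < z ->
  exists n : nat, 2 ^+ n < z <= 2 ^+ n.+1.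
Proof.
move=> z_gt1; have [k] := exists_pow2_ge z.
elim: k => [|k IHk] z_le; first by move: (lt_le_trans z_gt1 z_le); rewrite ltxx.
by case: (leP z (2 ^+ k)) => [/IHk//|z_gt]; exists k; rewrite z_gt z_le.
Qed.

Lemma geometric_le_expR_pow2 (C : R) : 0 <= C ->
  exists K : R, 0 < K /\
    forall N : nat, 2 ^+ N * (C ^+ N.+2 * 2 ^+ N.+1) <= K * expR (2 ^+ N).
Proof.
move=> C_ge0; have [p C_le] := exists_pow2_ge C.
exists (2 ^+ (p.*2.+1) * (p.+2)`!%:R); split.
  by rewrite mulr_gt0 ?exprn_gt0 ?ltr0n ?fact_gt0.
move=> N.
have CN : C ^+ N.+2 <= (2 ^+ p) ^+ N.+2 by rewrite lerXn2r ?nnegrE ?exprn_ge0.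
have pow_expR : (2 ^+ N) ^+ p.+2 <= (p.+2)`!%:R * expR (2 ^+ N :> R).
  have := expR_ge1Dxn p.+1 (exprn_ge0 N (ler0n R 2)).
  rewrite -ler_pdivrMl ?ltr0n ?fact_gt0 // mulrC; lra.
apply: (le_trans (y := 2 ^+ N * ((2 ^+ p) ^+ N.+2 * 2 ^+ N.+1))).
  by rewrite ler_wpM2l ?exprn_ge0 // ler_wpM2r ?exprn_ge0.
have -> : 2 ^+ N * ((2 ^+ p) ^+ N.+2 * 2 ^+ N.+1) =
          2 ^+ (p.*2.+1) * (2 ^+ N) ^+ p.+2 :> R.
  by rewrite -!exprM -!exprD; congr (_ ^+ _); lia.
by rewrite -mulrA ler_wpM2l ?exprn_ge0.
Qed.

Lemma expR_pow2_geometric_le_eps (C Lam eta : R) : 0 <= C -> 1 <= Lam -> 0 < eta ->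
  exists m : nat, forall n : nat,
    expR (- (2 ^+ (n + m) * Lam)) * C ^+ (n + m).+2 <= eta / (2 ^ n.+1)%:R.
Proof.
move=> C_ge0 Lam_ge1 eta_gt0.
have [K [K_gt0 hK]] := geometric_le_expR_pow2 C_ge0.
have [m K_le] := exists_pow2_ge (K / eta).
exists m => n; set N := (n + m)%N.
have E_gt0 : 0 < expR (2 ^+ N : R) := expR_gt0 _.
have a_le : (2 ^ n.+1)%:R <= 2 ^+ N.+1 :> R.
  by rewrite natrX ler_eXn2l ?ltr1n // ltnS leq_addr.
have b_le : 2 ^+ m <= 2 ^+ N :> R by rewrite ler_eXn2l ?ltr1n // leq_addl.
have {}K_le : K <= eta * 2 ^+ m by rewrite -ler_pdivrMl // mulrC.
have {}hK := hK N.
apply: (le_trans (y := (expR (2 ^+ N))^-1 * C ^+ N.+2)).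
  rewrite ler_wpM2r ?exprn_ge0 // -expRN ler_expR lerN2.
  by rewrite ler_peMr ?exprn_ge0.
rewrite ler_pdivlMr ?ltr0n ?expn_gt0 // -mulrA ler_pdivrMl //.
have b_gt0 : 0 < 2 ^+ m :> R by rewrite exprn_gt0.
rewrite -(ler_pM2l b_gt0); apply: le_trans (le_trans hK _).
  have X_ge0 : 0 <= C ^+ N.+2 := exprn_ge0 _ C_ge0.
  apply: ler_pM; [exact: ltW | exact: mulr_ge0 X_ge0 (ler0n _ _) | exact: b_le |].
  exact: ler_pM X_ge0 (ler0n _ _) (lexx _) a_le.
have -> : 2 ^+ m * (expR (2 ^+ N) * eta) = eta * 2 ^+ m * expR (2 ^+ N) by ring.
exact: ler_pM (ltW K_gt0) (ltW E_gt0) K_le (lexx _).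
Qed.

Lemma expR_le_dyadic_series (t dl A v i : R) (u : (\bar R)^nat) :
  0 < t -> 0 <= dl <= 1/2 -> 0 < A -> 0 <= i ->
  (t * v <= A -> expR (- (t * (1 - dl) * v)) <= i) ->
  (forall n, (0 <= u n)%E) ->
  (forall n, v <= 2 ^+ n.+1 * A / t -> ((expR (- (2 ^+ n * A / 2)))%:E <= u n)%E) ->
  ((expR (- (t * (1 - dl) * v)))%:E <= i%:E + \sum_(n <oo) u n)%E.
Proof.
move=> t_gt0 /andP[dl_ge0 dl_le] A_gt0 i_ge0 hi u_ge0 hu.
have [tv_le|tv_gt] := leP (t * v) A.
  apply: le_trans _ (leeDl _ (nneseries_ge0 _)) => [|n _ _ //].
  by rewrite lee_fin hi.
have [n /andP[lo up]] : exists n : nat, 2 ^+ n < t * v / A <= 2 ^+ n.+1.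
  by apply: exists_dyadic_bracket; rewrite ltr_pdivlMr // mul1r.
apply: le_trans _ (leeDr _ _); last by rewrite lee_fin.
rewrite (@nneseriesD1 _ _ n) //.
apply: le_trans _ (leeDl _ (nneseries_ge0 _)) => [|k _ _ //].
apply: le_trans (hu n _).
  rewrite lee_fin ler_expR lerN2.
  move: lo; rewrite ltr_pdivlMr // => lo; nra.
by rewrite ler_pdivlMr // mulrC -ler_pdivrMr.
Qed.

Lemma fine_ratio_sub1_lt (x y : \bar R) (e : R) : 0 < e -> (0 < x)%E ->
  x \is a fin_num -> (x <= y)%E -> (y <= (1 + e)%:E * x)%E ->
  `|fine x / fine y - 1| < e.
Proof.
move=> e_gt0 x_gt0 x_fin xy yx.
have y_fin : y \is a fin_num.
  rewrite ge0_fin_numE ?(le_trans (ltW x_gt0) xy) //.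
  by apply: le_lt_trans yx _; rewrite -(fineK x_fin) -EFinM ltry.
move: x_gt0 xy yx; rewrite -(fineK x_fin) -(fineK y_fin) -EFinM !lee_fin lte_fin /=.
move: (fine x) (fine y) => a b a_gt0 ab ba; have b_gt0 : 0 < b by lra.
have -> : a / b - 1 = (a - b) / b by rewrite mulrBl divff ?gt_eqF.
have eb_gt0 : 0 < e * (e * b) by rewrite !mulr_gt0.
rewrite ltr_norml ltr_pdivlMr // ltr_pdivrMr //; apply/andP; split; nra.
Qed.

End DyadicEstimates.

Section PartitionFunction.
Context d (T : measurableType d) (R : realType).
Variables (mu : {measure set T -> \bar R}) (V : T -> R).
Hypothesis V_meas : measurable_fun setT V.
Hypothesis V_ge0 : {ae mu, forall x, 0 <= V x}.

Local Notation sigma := (sublevel_measure mu V).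
Local Notation Z := (partition_fn mu V).

Lemma measurable_sublevel (lam : R) : measurable [set x | V x <= lam].
Proof.
have := V_meas measurableT (@measurable_itv _ `]-oo, lam]).
by rewrite setTI; congr measurable; apply/seteqP; split => x /=; rewrite in_itv.
Qed.

Lemma measurable_partition_integrand (s : R) :
  measurable_fun setT (fun x => ((expR (- (s * V x)))%:E : \bar R)).
Proof.
by apply/measurable_EFinP; do 2 apply: measurableT_comp => //; exact: measurable_funM.
Qed.

Lemma sublevel_le_partition_fn (s lam : R) : 0 <= s ->
  ((expR (- (s * lam)))%:E * sigma lam <= Z s)%E.
Proof.
move=> s_ge0; have mS := measurable_sublevel lam.
have mI : measurable_fun setT (fun x => (\1_[set y | V y <= lam] x)%:E : \bar R).
  by apply/measurable_EFinP; exact: measurable_indic.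
rewrite /sublevel_measure /partition_fn -[[set x | V x <= lam]]setIT.
rewrite -integral_indic // -ge0_integralZl_EFin ?expR_ge0 //.
apply: ge0_le_integral => //.
- exact: measurable_funeM.
- exact: measurable_partition_integrand.
move=> x _; rewrite -EFinM lee_fin indicE.
have [/set_mem Vx|_] := boolP (x \in _); last by rewrite mulr0 expR_ge0.
by rewrite mulr1 ler_expR lerN2 ler_wpM2l.
Qed.

Lemma partition_fn_le (s1 s2 : R) : 0 <= s1 <= s2 -> (Z s2 <= Z s1)%E.
Proof.
move=> /andP[s1_ge0 s12]; apply: ae_ge0_le_integral => //.
- exact: measurable_partition_integrand.
- exact: measurable_partition_integrand.
apply: filterS V_ge0 => x Vx _.
by rewrite lee_fin ler_expR lerN2 ler_wpM2r.
Qed.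

Definition dyadic_tail (A t : R) (x : T) : \bar R :=
  \sum_(n <oo) ((expR (- (2 ^+ n * A / 2)))%:E *
                (\1_[set y | V y <= 2 ^+ n.+1 * A / t] x)%:E)%E.

Let dyadic_term_ge0 (A t : R) n x :
  (0 <= (expR (- (2 ^+ n * A / 2)))%:E *
        (\1_[set y | V y <= 2 ^+ n.+1 * A / t] x)%:E)%E.
Proof. by rewrite -EFinM lee_fin mulr_ge0 ?expR_ge0 // indicE ler0n. Qed.

Let measurable_dyadic_term (A t : R) n :
  measurable_fun setT (fun x => (expR (- (2 ^+ n * A / 2)))%:E *
        (\1_[set y | V y <= 2 ^+ n.+1 * A / t] x)%:E)%E.
Proof.
apply: measurable_funeM; apply/measurable_EFinP.
by apply: measurable_indic; exact: measurable_sublevel.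
Qed.

Lemma dyadic_tail_ge0 (A t : R) x : (0 <= dyadic_tail A t x)%E.
Proof. by apply: nneseries_ge0 => n _ _; exact: dyadic_term_ge0. Qed.

Lemma measurable_dyadic_tail (A t : R) : measurable_fun setT (dyadic_tail A t).
Proof.
apply: ge0_emeasurable_sum => [n x _ _|n _]; first exact: dyadic_term_ge0.
exact: measurable_dyadic_term.
Qed.

Lemma integral_dyadic_tail (A t : R) :
  (\int[mu]_x dyadic_tail A t x =
   \sum_(n <oo) (expR (- (2 ^+ n * A / 2)))%:E * sigma (2 ^+ n.+1 * A / t))%E.
Proof.
rewrite integral_nneseries //.
apply: eq_eseriesr => n _; rewrite ge0_integralZl_EFin ?expR_ge0 //.
- by rewrite integral_indic ?setIT //; exact: measurable_sublevel.
- by apply/measurable_EFinP; apply: measurable_indic; exact: measurable_sublevel.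
Qed.

Lemma expR_le_dyadic_tail (t dl A i : R) x :
  0 < t -> 0 <= dl <= 1/2 -> 0 < A -> 0 <= i ->
  (t * V x <= A -> expR (- (t * (1 - dl) * V x)) <= i) ->
  ((expR (- (t * (1 - dl) * V x)))%:E <= i%:E + dyadic_tail A t x)%E.
Proof.
move=> t_gt0 dl_bnd A_gt0 i_ge0 hi.
apply: (@expR_le_dyadic_series _ t dl A) => // n Vx.
by rewrite indicE mem_set //= mule1.
Qed.

Lemma partition_fn_le_sublevel_tail (t A : R) : 0 < t -> 0 < A ->
  (Z t <= sigma (A / t) + \int[mu]_x dyadic_tail A t x)%E.
Proof.
move=> t_gt0 A_gt0; have mS := measurable_sublevel (A / t).
have mI : measurable_fun setT (fun x => (\1_[set y | V y <= A / t] x)%:E : \bar R).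
  by apply/measurable_EFinP; exact: measurable_indic.
apply: (@le_trans _ _
  (\int[mu]_x ((\1_[set y | V y <= A / t] x)%:E + dyadic_tail A t x))%E).
  apply: ae_ge0_le_integral => //.
  - exact: measurable_partition_integrand.
  - by move=> x _; rewrite adde_ge0 ?dyadic_tail_ge0 // lee_fin indicE ler0n.
  - by apply: emeasurable_funD => //; exact: measurable_dyadic_tail.
  apply: filterS V_ge0 => x Vx_ge0 _.
  have := @expR_le_dyadic_tail t 0 A (\1_[set y | V y <= A / t] x) x.
  rewrite subr0 mulr1; apply => //; first by rewrite lexx /=; lra.
  move=> tV_le; rewrite indicE mem_set ?expR_le1 ?oppr_le0 ?mulr_ge0 // ?ltW //.
  by rewrite /= ler_pdivlMr // mulrC.
rewrite ge0_integralD //.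
- by rewrite integral_indic ?setIT.
- by move=> x _; exact: dyadic_tail_ge0.
- exact: measurable_dyadic_tail.
Qed.

Lemma partition_fn_shrink_le (t dl A : R) : 0 < t -> 0 <= dl <= 1/2 -> 0 < A ->
  (Z (t * (1 - dl)) <= (expR (dl * A))%:E * Z t + \int[mu]_x dyadic_tail A t x)%E.
Proof.
move=> t_gt0 dl_bnd A_gt0; have /andP[dl_ge0 _] := dl_bnd.
have mE : measurable_fun setT
    (fun x => (expR (dl * A))%:E * (expR (- (t * V x)))%:E)%E.
  by apply: measurable_funeM; exact: measurable_partition_integrand.
apply: (@le_trans _ _ (\int[mu]_x
  ((expR (dl * A))%:E * (expR (- (t * V x)))%:E + dyadic_tail A t x))%E).
  apply: ge0_le_integral => //.
  - exact: measurable_partition_integrand.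
  - by apply: emeasurable_funD => //; exact: measurable_dyadic_tail.
  move=> x _; rewrite -EFinM; apply: expR_le_dyadic_tail => //.
  by move=> tV_le; rewrite -expRD ler_expR; nra.
rewrite ge0_integralD //.
- rewrite ge0_integralZl_EFin ?expR_ge0 //.
  exact: measurable_partition_integrand.
- by move=> x _; exact: dyadic_tail_ge0.
- exact: measurable_dyadic_tail.
Qed.

Lemma sublevel_measure_lty (dist : T -> T -> R) (p0 : T) :
  (forall r, measurable [set x | dist x p0 < r]) ->
  (forall r, (mu [set x | (dist x p0 < r)%R] < +oo)%E) ->
  (forall L, 0 < L -> exists Rr, 0 < Rr /\
     {ae mu, forall x, Rr <= dist x p0 -> L <= V x}) ->
  forall lam, (sigma lam < +oo)%E.
Proof.
move=> ball_meas ball_fin V_esslim lam.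
have L_gt0 : 0 < `|lam| + 1 by rewrite ltr_wpDl.
have [Rr [_ [N [mN muN0 outN]]]] := V_esslim _ L_gt0.
have sub : [set x | V x <= lam] `<=` [set x | dist x p0 < Rr] `|` N.
  move=> x /= Vx_le; have [|Rr_le] := ltP (dist x p0) Rr; first by left.
  right; apply: outN => /(_ Rr_le); have := ler_norm lam; lra.
apply: le_lt_trans (ball_fin Rr).
rewrite -(measureU0 (ball_meas Rr) mN muN0).
by apply: le_measure; rewrite ?inE //; [exact: measurable_sublevel | exact: measurableU].
Qed.

Variables (C lam0 : R).
Hypothesis C_ge0 : 0 <= C.
Hypothesis lam0_gt0 : 0 < lam0.
Hypothesis sigma_doubling :
  forall lam, lam0 <= lam -> (sigma (2 * lam) <= C%:E * sigma lam)%E.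

Lemma sublevel_measure_doubling_iter (k : nat) (lam : R) : lam0 <= lam ->
  (sigma (2 ^+ k * lam) <= (C ^+ k)%:E * sigma lam)%E.
Proof.
move=> lam_ge; elim: k => [|k IHk]; first by rewrite expr0 mul1r mul1e.
have lam0_le : lam0 <= 2 ^+ k * lam.
  rewrite (le_trans lam_ge) // ler_peMl ?exprn_ege1 ?ler1n //.
  exact: le_trans (ltW lam0_gt0) lam_ge.
rewrite exprS -mulrA (le_trans (sigma_doubling lam0_le)) // exprS EFinM -muleA.
by rewrite lee_wpmul2l ?lee_fin.
Qed.

Lemma sublevel_measure_gt0 (lam : R) : (0 < mu setT)%E -> lam0 <= lam ->
  (0 < sigma lam)%E.
Proof.
move=> mu_pos lam_ge; rewrite lt0e measure_ge0 andbT; apply/negP => /eqP sigma0.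
have [N [mN muN0 covN]] : mu.-negligible (\bigcup_k [set x | V x <= 2 ^+ k * lam]).
  apply: negligible_bigcup => k.
  exists [set x | V x <= 2 ^+ k * lam]; split => //; first exact: measurable_sublevel.
  apply/eqP; rewrite eq_le measure_ge0 andbT.
  by have := sublevel_measure_doubling_iter k lam_ge; rewrite sigma0 mule0.
have : (mu setT <= mu N)%E.
  apply: le_measure; rewrite ?inE // => x _; apply: covN.
  have [k Vx_le] := exists_pow2_ge (V x / lam).
  by exists k => //=; rewrite -ler_pdivrMr // (lt_le_trans lam0_gt0).
by rewrite muN0 leNgt mu_pos.
Qed.

Lemma integral_dyadic_tail_le (Lam eta t : R) (m : nat) :
  lam0 <= Lam -> 0 < t <= 1 -> 0 <= eta -> sigma (Lam / t) \is a fin_num ->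
  (forall n, expR (- (2 ^+ (n + m) * Lam)) * C ^+ (n + m).+2 <= eta / (2 ^ n.+1)%:R) ->
  (\int[mu]_x dyadic_tail (2 ^+ m.+1 * Lam) t x <= eta%:E * sigma (Lam / t))%E.
Proof.
move=> Lam_ge /andP[t_gt0 t_le1] eta_ge0 s_fin hm.
have lam0_le : lam0 <= Lam / t.
  by rewrite (le_trans Lam_ge) // ler_pdivlMr // ler_piMr // (le_trans (ltW lam0_gt0)).
set s := fine (sigma (Lam / t)); have s_ge0 : 0 <= s by rewrite fine_ge0 ?measure_ge0.
have sE : sigma (Lam / t) = s%:E by rewrite fineK.
rewrite integral_dyadic_tail sE -EFinM.
apply: le_trans (epsilon_trick0 xpredT (mulr_ge0 eta_ge0 s_ge0)).
apply: lee_nneseries => [n _ _|n _].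
  by rewrite mule_ge0 ?lee_fin ?expR_ge0 ?measure_ge0.
have -> : 2 ^+ n.+1 * (2 ^+ m.+1 * Lam) / t = 2 ^+ (n + m).+2 * (Lam / t).
  by rewrite !exprS exprD; field; exact: lt0r_neq0.
have -> : 2 ^+ n * (2 ^+ m.+1 * Lam) / 2 = 2 ^+ (n + m) * Lam.
  by rewrite exprS exprD; field.
apply: le_trans (lee_wpmul2l _ (sublevel_measure_doubling_iter _ lam0_le)) _.
  by rewrite lee_fin expR_ge0.
rewrite sE -!EFinM lee_fin mulrA [eta * s / _]mulrAC.
exact: ler_pM (mulr_ge0 (expR_ge0 _) (exprn_ge0 _ C_ge0)) s_ge0 (hm n) (lexx s).
Qed.

Hypothesis sigma_fin : forall lam, (sigma lam < +oo)%E.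
Hypothesis mu_pos : (0 < mu setT)%E.

Lemma partition_fn_ratio_uniform :
  forall eps : R, 0 < eps -> exists eta : R, 0 < eta /\
  forall delta t : R, 0 < delta -> delta < eta -> 0 < t -> t <= 1 ->
    `|fine (Z t) / fine (Z (t * (1 - delta))) - 1| < eps.
Proof.
move=> eps eps_gt0; pose Lam := Num.max lam0 1.
have Lam_ge1 : 1 <= Lam by rewrite le_max lexx orbT.
have Lam_ge : lam0 <= Lam by rewrite le_max lexx.
pose eta := eps / 2 * expR (- Lam).
have eta_gt0 : 0 < eta by rewrite mulr_gt0 ?expR_gt0 ?divr_gt0.
have [m hm] := expR_pow2_geometric_le_eps C_ge0 Lam_ge1 eta_gt0.
pose A := 2 ^+ m.+1 * Lam.
have A_gt0 : 0 < A by rewrite mulr_gt0 ?exprn_gt0 //; lra.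
have ln_gt0 : 0 < ln (1 + eps / 2) by rewrite ln_gt0 //; lra.
exists (Num.min (1 / 2) (ln (1 + eps / 2) / A)); split.
  by rewrite lt_min !divr_gt0.
move=> dl t dl_gt0; rewrite lt_min => /andP[dl_le dlA] t_gt0 t_le1.
have dl_bnd : 0 <= dl <= 1 / 2 by rewrite ltW //= ltW.
have expR_dlA : expR (dl * A) <= 1 + eps / 2.
  rewrite -[X in _ <= X]lnK ?posrE ?ler_expR; last lra.
  by move: dlA; rewrite ltr_pdivlMr // => /ltW.
have s_fin : sigma (Lam / t) \is a fin_num by rewrite ge0_fin_numE ?measure_ge0.
have t_bnd : 0 < t <= 1 by rewrite t_gt0 t_le1.
have Lam_t_ge : lam0 <= Lam / t.
  by rewrite (le_trans Lam_ge) // ler_pdivlMr // ler_piMr //; lra.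
have tail_le := integral_dyadic_tail_le Lam_ge t_bnd (ltW eta_gt0) s_fin hm.
have Z_ge := sublevel_le_partition_fn (Lam / t) (ltW t_gt0).
rewrite mulrC divfK ?gt_eqF // in Z_ge.
have Zt_gt0 : (0 < Z t)%E.
  apply: lt_le_trans Z_ge.
  by rewrite mule_gt0 ?lte_fin ?expR_gt0 ?sublevel_measure_gt0.
have Zt_fin : Z t \is a fin_num.
  rewrite ge0_fin_numE ?(ltW Zt_gt0) //.
  apply: le_lt_trans (partition_fn_le_sublevel_tail t_gt0 A_gt0) _.
  apply: lte_add_pinfty => //; apply: le_lt_trans tail_le _.
  by rewrite -(fineK s_fin) -EFinM ltry.
have tail_le_Z : (\int[mu]_x dyadic_tail A t x <= (eps / 2)%:E * Z t)%E.
  apply: le_trans tail_le _; rewrite /eta EFinM -muleA.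
  by apply: lee_wpmul2l => //; rewrite lee_fin; lra.
apply: fine_ratio_sub1_lt => //.
  by apply: partition_fn_le; apply/andP; split; nra.
apply: le_trans (partition_fn_shrink_le t_gt0 dl_bnd A_gt0) _.
apply: le_trans (leeD2l _ tail_le_Z) _.
have z_ge0 : 0 <= fine (Z t) by rewrite fine_ge0 // ltW.
rewrite -(fineK Zt_fin) -!EFinM -EFinD lee_fin; nra.
Qed.

End PartitionFunction.

Theorem corollary3p1 (d : measure_display) (T : measurableType d) (R : realType)
  (mu : {measure set T -> \bar R}) (dist : T -> T -> R) (p0 : T) (V : T -> R)
  (* metric axioms for the Riemannian distance *)
  (dist_ge0 : forall x y, 0 <= dist x y)
  (dist_eq0 : forall x y, dist x y = 0 <-> x = y)
  (dist_sym : forall x y, dist x y = dist y x)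
  (dist_tri : forall x y z, dist x z <= dist x y + dist y z)
  (* properties of the Riemannian measure on a complete (nonempty) manifold:
     metric balls are measurable, of finite measure, and M has positive measure *)
  (ball_meas : forall r : R, measurable [set x | dist x p0 < r])
  (ball_fin : forall r : R, (mu [set x | (dist x p0 < r)%R] < +oo)%E)
  (mu_pos : (0 < mu setT)%E)
  (* hypotheses on V *)
  (V_meas : measurable_fun setT V)
  (V_Lloc : forall r : R, exists C : R,
      {ae mu, forall x, (dist x p0 < r)%R -> (`|V x| <= C)%R})
  (V_ge1 : {ae mu, forall x, (1 <= V x)%R})
  (V_esslim : forall L : R, 0 < L -> exists Rr : R, 0 < Rr /\
      {ae mu, forall x, (Rr <= dist x p0)%R -> (L <= V x)%R})
  (V_doubling : doubling mu V) :
  forall eps : R, 0 < eps -> exists eta : R, 0 < eta /\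
    forall delta t : R, 0 < delta -> delta < eta -> 0 < t -> t <= 1 ->
      `| fine (partition_fn mu V t) / fine (partition_fn mu V (t * (1 - delta))) - 1 |
        < eps.
Proof.
have V_ge0 : {ae mu, forall x, 0 <= V x} by apply: filterS V_ge1 => x; apply: le_trans.
have [C [lam0 [C_gt0 [lam0_gt0 sigma_doubling]]]] := V_doubling.
have sigma_fin := sublevel_measure_lty V_meas ball_meas ball_fin V_esslim.
exact (partition_fn_ratio_uniform V_meas V_ge0 (ltW C_gt0) lam0_gt0 sigma_doubling
  sigma_fin mu_pos).
Qed.
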